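(* Let $H$ be a monoid and let $A\subseteq H\setminus\{1_H\}$ be a non-empty finite set such that $a\nmid_H b$ for all $a,b\in A$ with $a\neq b$. Then the set $\{1_H\}\cup A$ is irreducible in $\mathcal{P}_{\mathrm{fin},1}(H)$.
   Context: For a monoid $H$, $x\mid_H y$ means $y\in HxH=\{uxv:u,v\in H\}$. $\mathcal{P}_{\mathrm{fin},1}(H)$ denotes the set of all non-empty finite subsets of $H$ containing $1_H$, a monoid under $XY=\{xy:x\in X,y\in Y\}$. In a monoid $M$: $x\mid_M y$ iff $y\in MxM$; $x,y$ are associated if each divides the other; $x$ properly divides $y$ if $x\mid_M y$ and $y\nmid_M x$. A unit-divisor is an element dividing $1_M$; other elements are non-unit-divisors. An irreducible of $M$ is a non-unit-divisor $a$ such that $a\neq xy$ for all non-unit-divisors $x,y$ properly dividing $a$. *)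

From HB Require Import structures.
From mathcomp Require Import all_boot.
From mathcomp Require Import finmap.
Set Implicit Arguments. Unset Strict Implicit. Unset Printing Implicit Defensive.
Local Open Scope fset_scope.

Section Defs.
Variable H : monoidType.

Local Notation "x * y" := (@mul H x y).
Local Notation "1" := (@one H).

Definition mdvd (x y : H) : Prop := exists u v : H, y = u * x * v.

Definition Pfin1 (X : {fset H}) : bool := 1 \in X.

Definition fset_mul (X Y : {fset H}) : {fset H} :=
  [fset x * y | x in X, y in Y].

Definition Pone : {fset H} := [fset 1].

Definition Pdvd (X Y : {fset H}) : Prop :=
  exists U V : {fset H}, Pfin1 U /\ Pfin1 V /\ Y = fset_mul (fset_mul U X) V.

Definition Pproper_dvd (X Y : {fset H}) : Prop := Pdvd X Y /\ ~ Pdvd Y X.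

Definition Punit_divisor (X : {fset H}) : Prop := Pdvd X Pone.

Definition Pirreducible (A : {fset H}) : Prop :=
  Pfin1 A /\ ~ Punit_divisor A /\
  forall X Y : {fset H}, Pfin1 X -> Pfin1 Y ->
    ~ Punit_divisor X -> ~ Punit_divisor Y ->
    Pproper_dvd X A -> Pproper_dvd Y A -> A <> fset_mul X Y.

End Defs.

(* Suppose B = {1} ∪ A = X Y with X, Y proper divisors of B. Since 1 lies in X and
   in Y, both are subsets of B, and neither equals B, so some c ∈ A misses X and
   some d ∈ A misses Y. Every factor of an element of A that lies in B is 1 or
   that element, because A is a divisibility antichain; hence c ∈ Y and d ∈ X.
   Then d c ∈ X Y = B, and the same fact applied to d c forces d = c,
   contradicting d ∈ X and c ∉ X. *)
From HB Require Import structures.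
From mathcomp Require Import all_boot.
From mathcomp Require Import finmap.
Set Implicit Arguments. Unset Strict Implicit.
Local Open Scope fset_scope.

Section MonoidSubsets.
Variable H : monoidType.
Local Notation "x * y" := (@mul H x y).
Local Notation "1" := (@one H).

Lemma mem_fset_mul (X Y : {fset H}) x y :
  x \in X -> y \in Y -> x * y \in fset_mul X Y.
Proof. by move=> Xx Yy; apply/imfset2P; exists x => //; exists y. Qed.

Lemma fset_mulP (X Y : {fset H}) z :
  reflect (exists x y, [/\ x \in X, y \in Y & z = x * y]) (z \in fset_mul X Y).
Proof.
apply: (iffP idP) => [/imfset2P [x Xx [y Yy ->]]|[x [y [Xx Yy ->]]]].
  by exists x, y.
exact: mem_fset_mul.
Qed.

Lemma Pfin1_one : Pfin1 (Pone H).
Proof. by rewrite /Pfin1 /Pone inE. Qed.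

Lemma fset_mul_subl (X Y : {fset H}) : 1 \in Y -> X `<=` fset_mul X Y.
Proof. by move=> Y1; apply/fsubsetP=> x Xx; rewrite -[x]mulg1 mem_fset_mul. Qed.

Lemma fset_mul_subr (X Y : {fset H}) : 1 \in X -> Y `<=` fset_mul X Y.
Proof. by move=> X1; apply/fsubsetP=> y Yy; rewrite -[y]mul1g mem_fset_mul. Qed.

Lemma fset_mul1l (X : {fset H}) : fset_mul (Pone H) X = X.
Proof.
apply/eqP; rewrite eqEfsubset fset_mul_subr ?andbT; last exact: Pfin1_one.
by apply/fsubsetP=> _ /fset_mulP [x [y [/fset1P -> Yy ->]]]; rewrite mul1g.
Qed.

Lemma fset_mul1r (X : {fset H}) : fset_mul X (Pone H) = X.
Proof.
apply/eqP; rewrite eqEfsubset fset_mul_subl ?andbT; last exact: Pfin1_one.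
by apply/fsubsetP=> _ /fset_mulP [x [y [Xx /fset1P -> ->]]]; rewrite mulg1.
Qed.

Lemma Pdvd_refl (X : {fset H}) : Pdvd X X.
Proof.
by exists (Pone H), (Pone H); rewrite fset_mul1l fset_mul1r Pfin1_one.
Qed.

Lemma Pdvd_subset (X Y : {fset H}) : Pdvd X Y -> X `<=` Y.
Proof.
move=> [U [V [U1 [V1 ->]]]].
exact: fsubset_trans (fset_mul_subr _ U1) (fset_mul_subl _ V1).
Qed.

Lemma Pproper_dvd_neq (X Y : {fset H}) : Pproper_dvd X Y -> X != Y.
Proof. by move=> [_ nYX]; apply/eqP=> XY; apply: nYX; rewrite XY; apply: Pdvd_refl. Qed.

Lemma mdvd_mulr (x y : H) : mdvd x (x * y).
Proof. by exists 1, y; rewrite mul1g. Qed.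

Lemma mdvd_mull (x y : H) : mdvd y (x * y).
Proof. by exists x, 1; rewrite mulg1. Qed.

End MonoidSubsets.

Definition mdvd_antichain {H : monoidType} (A : {fset H}) : Prop :=
  forall a b : H, a \in A -> b \in A -> a != b -> ~ mdvd a b.

Section Antichain.
Variables (H : monoidType) (A : {fset H}).
Hypotheses (A_antichain : mdvd_antichain A) (A_notin1 : @one H \notin A).
Local Notation "x * y" := (@mul H x y).
Local Notation "1" := (@one H).
Local Notation B := (1 |` A).

Lemma fsetU1_neq1_mem x : x \in B -> x != 1 -> x \in A.
Proof. by rewrite !inE => /orP [/eqP ->|//]; rewrite eqxx. Qed.

Lemma antichain_divisor x c : x \in B -> c \in A -> mdvd x c -> x = 1 \/ x = c.
Proof.
move=> Bx Ac xc; have [->|x_neq1] := eqVneq x 1; first by left.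
have [->|x_neqc] := eqVneq x c; first by right.
by case: (A_antichain (fsetU1_neq1_mem Bx x_neq1) Ac x_neqc).
Qed.

Lemma antichain_mul_eq d c : d \in A -> c \in A -> d * c \in B -> d = c.
Proof.
move=> Ad Ac Bdc; have Bd : d \in B by rewrite !inE Ad orbT.
have d_neq1 : d != 1 by apply: contraNneq A_notin1 => <-.
have [dc1|dc_neq1] := eqVneq (d * c) 1.
  have dc : mdvd d c by exists c, c; rewrite -mulgA dc1 mulg1.
  by case: (antichain_divisor Bd Ac dc) => // d1; rewrite d1 eqxx in d_neq1.
have Adc := fsetU1_neq1_mem Bdc dc_neq1.
have [d1|d_eq] := antichain_divisor Bd Adc (mdvd_mulr d c).
  by rewrite d1 eqxx in d_neq1.
have Bc : c \in B by rewrite !inE Ac orbT.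
have [c1|c_eq] := antichain_divisor Bc Adc (mdvd_mull d c); last by rewrite d_eq.
by move: A_notin1; rewrite -c1 Ac.
Qed.

Lemma antichain_notin_factorl (X Y : {fset H}) c :
  1 \in Y -> B = fset_mul X Y -> c \in A -> c \notin X -> c \in Y.
Proof.
move=> Y1 B_eq Ac Xc; have : c \in B by rewrite !inE Ac orbT.
rewrite B_eq => /fset_mulP [x [y [Xx Yy c_eq]]]; subst c.
have Bx : x \in B by rewrite B_eq -[x]mulg1 mem_fset_mul.
case: (antichain_divisor Bx Ac (mdvd_mulr x y)) => [->|xy_eq].
  by rewrite mul1g.
by rewrite -xy_eq Xx in Xc.
Qed.

Lemma antichain_notin_factorr (X Y : {fset H}) d :
  1 \in X -> B = fset_mul X Y -> d \in A -> d \notin Y -> d \in X.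
Proof.
move=> X1 B_eq Ad Yd; have : d \in B by rewrite !inE Ad orbT.
rewrite B_eq => /fset_mulP [x [y [Xx Yy d_eq]]]; subst d.
have By : y \in B by rewrite B_eq -[y]mul1g mem_fset_mul.
case: (antichain_divisor By Ad (mdvd_mull x y)) => [->|xy_eq].
  by rewrite mulg1.
by rewrite -xy_eq Yy in Yd.
Qed.

Lemma exists_antichain_notin (X : {fset H}) :
  1 \in X -> X `<=` B -> X != B -> exists2 c, c \in A & c \notin X.
Proof.
move=> X1 XB X_neqB.
have /fsubsetPn [c Bc Xc] : ~~ (B `<=` X) by rewrite eqEfsubset XB in X_neqB.
exists c => //; apply: fsetU1_neq1_mem Bc _.
by apply: contraNneq Xc => ->.
Qed.

End Antichain.

Theorem proposition2p4 (H : monoidType) (A : {fset H}) :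
  A != fset0 ->
  (@one H) \notin A ->
  (forall a b : H, a \in A -> b \in A -> a != b -> ~ mdvd a b) ->
  Pirreducible ((@one H) |` A).
Proof.
move=> /fset0Pn [a Aa] A_notin1 A_antichain.
have B1 : @one H \in @one H |` A by rewrite !inE eqxx.
split=> //; split.
  move=> /Pdvd_subset /fsubsetP /(_ a); rewrite !inE Aa orbT => /(_ isT) /eqP a1.
  by rewrite -a1 Aa in A_notin1.
move=> X Y X1 Y1 _ _ XB YB B_eq.
have [c Ac Xc] := exists_antichain_notin X1 (Pdvd_subset XB.1) (Pproper_dvd_neq XB).
have [d Ad Yd] := exists_antichain_notin Y1 (Pdvd_subset YB.1) (Pproper_dvd_neq YB).
have Yc := antichain_notin_factorl A_antichain Y1 B_eq Ac Xc.
have Xd := antichain_notin_factorr A_antichain X1 B_eq Ad Yd.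
have Bdc : mul d c \in @one H |` A by rewrite B_eq mem_fset_mul.
have dc := antichain_mul_eq A_antichain A_notin1 Ad Ac Bdc.
by rewrite -dc Xd in Xc.
Qed.
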